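(* Let $a,b\in\mathbb{N}$ with $b\ge 2$ and $a=b(b-1)$. Then for every integer $k\ge 2$ there exists an integer $H_k\ge1$ (depending on $a,b,k$) such that for every integer $n\ge 0$, the induced subgraph $G_{a,b,a,b-1}[\{n+1,\ldots,n+H_k\}]$ contains a clique on $k$ vertices. In particular $\omega(G_{a,b,a,b-1})=\infty$.
   Context: $\mathbb{N}=\{1,2,\dots\}$. $R_{a,b,a,b-1} := \left\{ \frac{an+b}{an+b-1} : n \in \mathbb{N} \right\}$; $G_{a,b,a,b-1}$ is the graph with vertex set $\mathbb{N}$ and edge set $\{\{m,n\}: m/n\in R_{a,b,a,b-1}\}$. For $W\subseteq\mathbb{N}$, $G[W]$ is the induced subgraph on $W$. $\omega$ denotes clique number. *)

From mathcomp Require Import all_boot.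
Set Implicit Arguments. Unset Strict Implicit. Unset Printing Implicit Defensive.

(* m / n = (a t + b) / (a t + b - 1) for some t in N = {1,2,...},
   written by cross-multiplication (all denominators positive when b >= 2
   and n >= 1). *)
Definition in_ratio_set (a b m n : nat) : Prop :=
  exists t : nat, 0 < t /\ m * (a * t + b - 1) = n * (a * t + b).

Definition G_edge (a b m n : nat) : Prop :=
  0 < m /\ 0 < n /\ (in_ratio_set a b m n \/ in_ratio_set a b n m).

Definition is_clique (a b : nat) (s : seq nat) : Prop :=
  uniq s /\ forall x y, x \in s -> y \in s -> x != y -> G_edge a b x y.

From mathcomp Require Import all_boot zify.
Set Implicit Arguments. Unset Strict Implicit. Unset Printing Implicit Defensive.

(* For x < y and d = y - x, the vertices x and y are adjacent exactly when
   (b - 1) d | x, b d | y and x > (b - 1) d.  Call a finite set s of offsets,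
   bounded by top, a pattern if (b - 1)(y - x) divides x away from the primes
   of b and b (y - x) divides top - y at the primes of b, for all x < y in s.
   Then X + s is a clique as soon as X is large, X = 0 modulo (b - 1) W, where
   W b^M is a multiple of top! with W prime to b, and X = -top modulo a high
   power of b.  Patterns of every size arise from s |-> {0} u ((b - 1) W + b s),
   and by the Chinese remainder theorem admissible X occur in every interval
   whose length is the product of the two moduli. *)

Lemma dvdn_coprime_mulr m n x y : coprime x y -> m %| n * x -> m %| n * y -> m %| n.
Proof.
move=> cxy mx my; have : m %| gcdn (n * x) (n * y) by rewrite dvdn_gcd mx my.
by rewrite -muln_gcdr (eqP cxy) muln1.
Qed.

Lemma exists_dvdn_coprime_mul_exp b n : 0 < b -> 0 < n ->
  exists W M, coprime W b /\ n %| W * b ^ M.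
Proof.
move=> b_gt0; elim/ltn_ind: n => n IHn n_gt0.
have [cnb | ncnb] := boolP (coprime n b); first by exists n, 0; rewrite muln1.
have g_gt1 : 1 < gcdn n b.
  by move: ncnb; rewrite /coprime ltn_neqAle gcdn_gt0 n_gt0 eq_sym andbT.
have [||W [M [cWb dvd_nW]]] := IHn (n %/ gcdn n b) => //.
- by rewrite ltn_Pdiv.
- by rewrite divn_gt0 ?gcdn_gt0 ?n_gt0 // dvdn_leq // dvdn_gcdl.
exists W, M.+1; split => //.
rewrite -(divnK (dvdn_gcdl n b)) expnSr mulnA.
exact: dvdn_mul dvd_nW (dvdn_gcdr n b).
Qed.

Lemma chinese_window p q r1 r2 m : 0 < p * q -> coprime p q ->
  exists X, [/\ X = r1 %[mod p], X = r2 %[mod q] & m < X <= m + p * q].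
Proof.
move=> pq_gt0 cpq; set P := p * q; set r := chinese p q r1 r2.
exists (m.+1 + (r + P * m.+1 - m.+1) %% P).
have XP : m.+1 + (r + P * m.+1 - m.+1) %% P = r %[mod P].
  rewrite modnDmr subnKC; first by rewrite mulnC addnC modnMDl.
  by apply: leq_trans (leq_addl r _); rewrite leq_pmull.
have ltP := ltn_pmod (r + P * m.+1 - m.+1) pq_gt0.
split; last by apply/andP; split; lia.
- by rewrite -(modn_dvdm _ (dvdn_mulr q (dvdnn p))) XP modn_dvdm ?dvdn_mulr // chinese_modl.
- by rewrite -(modn_dvdm _ (dvdn_mull p (dvdnn q))) XP modn_dvdm ?dvdn_mull // chinese_modr.
Qed.

Lemma G_edgeC a b x y : G_edge a b x y -> G_edge a b y x.
Proof. by move=> [x_gt0 [y_gt0 [rxy | ryx]]]; do 2 split => //; [right | left]. Qed.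

Section Construction.
Variable b : nat.
Hypothesis b_gt1 : 1 < b.
Let b_gt0 : 0 < b := ltnW b_gt1.

(* With d = y - x and q = x / d, the ratio y / x is (q + 1) / q, and the
   conditions say exactly q = b - 1 (mod b (b - 1)) with q > b - 1. *)
Lemma G_edge_of_dvdn x y : x < y -> (b - 1) * (y - x) %| x -> b * (y - x) %| y ->
  (b - 1) * (y - x) < x -> G_edge (b * (b - 1)) b x y.
Proof.
move=> lt_xy dvd_x dvd_y big_x.
have d_gt0 : 0 < y - x by rewrite subn_gt0.
set d := y - x in dvd_x dvd_y big_x d_gt0.
set q := x %/ d.
have def_x : x = q * d by rewrite divnK // (dvdn_trans _ dvd_x) ?dvdn_mull.
have def_y : y = q.+1 * d by rewrite mulSn -def_x /d subnK // ltnW.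
have dvd_q : b - 1 %| q by move: dvd_x; rewrite def_x dvdn_pmul2r.
have dvd_q1 : b %| q.+1 by move: dvd_y; rewrite def_y dvdn_pmul2r.
have lt_q : b - 1 < q by move: big_x; rewrite def_x ltn_pmul2r.
have dvd_a : b * (b - 1) %| q - (b - 1).
  rewrite Gauss_dvd; last by rewrite coprime_sym subn1 coprimePn; lia.
  apply/andP; split; last exact: dvdn_sub.
  have -> : q - (b - 1) = q.+1 - b by clear -lt_q b_gt1; lia.
  exact: dvdn_sub.
set t := (q - (b - 1)) %/ (b * (b - 1)).
have def_t : b * (b - 1) * t = q - (b - 1) by rewrite mulnC divnK.
have x_gt0 : 0 < x by apply: leq_ltn_trans big_x.
split => //; split; first exact: ltn_trans lt_xy.
right; exists t; split.
  by rewrite lt0n; apply: contraTneq lt_q => t0; rewrite -leqNgt -subn_eq0 -def_t t0 muln0.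
rewrite def_t def_x def_y.
have -> : q - (b - 1) + b - 1 = q by clear -lt_q b_gt1; lia.
have -> : q - (b - 1) + b = q.+1 by clear -lt_q b_gt1; lia.
by rewrite [LHS]mulnAC [RHS]mulnAC (mulnC q).
Qed.

Definition pattern (N top : nat) (s : seq nat) : Prop :=
  [/\ uniq s, {in s, forall x, x <= top},
      {in s &, forall x y, 0 < x < y -> (b - 1) * (y - x) %| x * b ^ N} &
      {in s &, forall x y, x < y ->
         exists2 Q, coprime Q b & b * (y - x) %| (top - y) * Q}].

Definition grow (u : nat) (s : seq nat) := 0 :: [seq u + b * t | t <- s].

Lemma mem_grow u s x : x \in grow u s -> x = 0 \/ exists2 t, t \in s & x = u + b * t.
Proof. by rewrite inE => /predU1P [-> | /mapP [t st ->]]; [left | right; exists t]. Qed.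

Lemma coprime_gt0 W : coprime W b -> 0 < W.
Proof. by case: posnP => // ->; rewrite /coprime gcd0n => /eqP b1; lia. Qed.

Lemma coprime_pred_mull W : coprime W b -> coprime ((b - 1) * W) b.
Proof. by move=> cWb; rewrite coprimeMl cWb andbT subn1 coprimePn; lia. Qed.

Section Cofactor.
Variables top W M : nat.
Hypothesis coprime_Wb : coprime W b.
Hypothesis dvdn_fact_cofactor : top`! %| W * b ^ M.

Lemma dvdn_cofactor d : 0 < d <= top -> d %| W * b ^ M.
Proof. by move=> d_range; exact: dvdn_trans (dvdn_fact d_range) dvdn_fact_cofactor. Qed.

Section Extend.
Variables (N : nat) (s : seq nat).
Hypothesis s_pattern : pattern N top s.
Let u := (b - 1) * W.

Lemma pattern_grow : pattern (M + N).+1 (u + b * top) (grow u s).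
Proof.
have [s_uniq s_top s_away s_at] := s_pattern.
have u_gt0 : 0 < u by rewrite muln_gt0 (coprime_gt0 coprime_Wb) subn_gt0 b_gt1.
have lt_ub t t' : (u + b * t < u + b * t') = (t < t') by rewrite ltn_add2l ltn_pmul2l ?b_gt0.
split.
- rewrite /= map_inj_uniq ?s_uniq ?andbT; last first.
    by move=> t t' /addnI /eqP; rewrite eqn_pmul2l ?b_gt0 // => /eqP.
  by apply/mapP => -[t _] /eqP; rewrite eq_sym addn_eq0 gtn_eqF.
- move=> x /mem_grow [-> // | [t st ->]].
  by rewrite leq_add2l leq_pmul2l ?b_gt0 ?s_top.
- move=> x y /mem_grow [-> // | [t st ->]] /mem_grow [-> | [t' st' ->]] /andP [_].
    by rewrite ltn0.
  rewrite lt_ub => lt_tt'.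
  rewrite subnDl -mulnBr mulnDl mulnCA; apply: dvdn_add.
    rewrite expnS [u * _]mulnCA; apply: dvdn_mul (dvdnn b) _.
    rewrite /u -mulnA dvdn_pmul2l ?subn_gt0 // expnD mulnA dvdn_mulr //.
    rewrite dvdn_cofactor // subn_gt0 lt_tt' /=.
    exact: leq_trans (leq_subr _ _) (s_top _ st').
  have [-> | t_gt0] := posnP t; first by rewrite muln0 mul0n dvdn0.
  rewrite -[b * t * _]mulnA dvdn_pmul2l ?b_gt0 //.
  apply: dvdn_trans (s_away _ _ st st' _) _; first by rewrite t_gt0.
  by rewrite dvdn_mul // dvdn_exp2l // -addSn leq_addl.
- move=> x y /mem_grow [-> | [t st ->]] /mem_grow [-> | [t' st' ->]] //.
  + move=> _; exists (u + b * t').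
      by rewrite /coprime gcdnC addnC mulnC gcdnMDl gcdnC; exact: coprime_pred_mull.
    by rewrite subn0 subnDl -mulnBr -mulnA dvdn_pmul2l ?b_gt0 // dvdn_mull.
  + rewrite lt_ub => /(s_at _ _ st st') [Q cQ dvdQ]; exists Q => //.
    by rewrite !subnDl -!mulnBr -mulnA dvdn_pmul2l ?b_gt0.
Qed.

End Extend.

Section Shift.
Variables (N X : nat) (s : seq nat).
Hypothesis s_pattern : pattern N top s.
Local Notation B := (b ^ (M + N).+1).
Local Notation G := ((b - 1) * W).
Hypothesis dvdn_G_X : G %| X.
Hypothesis dvdn_B_Xtop : B %| X + top.

(* Divisibility of X + z is checked separately at the primes of b (multiply
   by B) and away from them (multiply by Q G, which is coprime to B). *)
Lemma dvdn_shift_split m z Q : coprime Q b -> z <= top -> m %| B * G ->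
  m %| (X + z) * B -> m %| (top - z) * (Q * G) -> m %| X + z.
Proof.
move=> cQb le_z_top dvd_BG dvd_zB dvd_zQG.
have cB_QG : coprime B (Q * G).
  by rewrite coprimeXl // coprime_sym coprimeMl cQb coprime_pred_mull.
apply: (dvdn_coprime_mulr cB_QG dvd_zB).
rewrite -(dvdn_addl _ dvd_zQG) -mulnDl -addnA subnKC //.
apply: dvdn_trans dvd_BG _; rewrite [(_ + _) * _]mulnCA.
exact/dvdn_mull/dvdn_mul.
Qed.

Lemma dvdn_diff_WB x y : x \in s -> y \in s -> x < y -> b * (y - x) %| W * B.
Proof.
have [_ s_top _ _] := s_pattern; move=> xs ys lt_xy.
rewrite expnS mulnCA; apply: dvdn_mul (dvdnn b) _.
rewrite (dvdn_trans (dvdn_cofactor _)) ?dvdn_mul ?dvdn_exp2l ?leq_addr //.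
by rewrite subn_gt0 lt_xy (leq_trans (leq_subr _ _) (s_top y ys)).
Qed.

Lemma dvdn_shift_low x y : x \in s -> y \in s -> x < y -> (b - 1) * (y - x) %| X + x.
Proof.
have [_ s_top s_away s_at] := s_pattern; move=> xs ys lt_xy.
have [Q cQb dvd_Q] := s_at x y xs ys lt_xy.
have dvd_BG : (b - 1) * (y - x) %| B * G.
  rewrite mulnCA dvdn_pmul2l ?subn_gt0 // mulnC.
  exact: dvdn_trans (dvdn_mull b (dvdnn _)) (dvdn_diff_WB xs ys lt_xy).
apply: (dvdn_shift_split cQb) => //; first exact: leq_trans (ltnW lt_xy) (s_top y ys).
- rewrite mulnDl; apply: dvdn_add.
    by apply: dvdn_trans dvd_BG _; rewrite [X * _]mulnC dvdn_mul.
  have [-> | x_gt0] := posnP x; first by rewrite mul0n dvdn0.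
  apply: dvdn_trans (s_away x y xs ys _) _; first by rewrite x_gt0.
  by rewrite dvdn_mul // dvdn_exp2l // leqW // leq_addl.
- have -> : top - x = top - y + (y - x) by have := s_top y ys; clear -lt_xy; lia.
  rewrite mulnA [_ * G]mulnC; apply: dvdn_mul; first exact: dvdn_mulr.
  rewrite mulnDl; apply: dvdn_add; last exact: dvdn_mulr.
  exact: dvdn_trans (dvdn_mull b (dvdnn _)) dvd_Q.
Qed.

Lemma dvdn_shift_high x y : x \in s -> y \in s -> x < y -> b * (y - x) %| X + y.
Proof.
have [_ s_top s_away s_at] := s_pattern; move=> xs ys lt_xy.
have [Q cQb dvd_Q] := s_at x y xs ys lt_xy.
have dvd_BG : b * (y - x) %| B * G.
  by apply: dvdn_trans (dvdn_diff_WB xs ys lt_xy) _; rewrite mulnCA mulnC dvdn_mull.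
apply: (dvdn_shift_split cQb) => //; [exact: s_top | | by rewrite mulnA dvdn_mulr].
have -> : X + y = X + x + (y - x) by rewrite -addnA subnKC // ltnW.
rewrite !mulnDl; apply: dvdn_add; last by rewrite [_ * B]mulnC dvdn_mul // expnS dvdn_mulr.
apply: dvdn_add; first by apply: dvdn_trans dvd_BG _; rewrite [X * _]mulnC dvdn_mul.
have [-> | x_gt0] := posnP x; first by rewrite mul0n dvdn0.
rewrite expnS mulnCA dvdn_pmul2l //.
apply: dvdn_trans (dvdn_mull _ (dvdnn _)) (dvdn_trans (s_away x y xs ys _) _).
  by rewrite x_gt0.
by rewrite dvdn_mul // dvdn_exp2l // leq_addl.
Qed.

Lemma clique_shift : (b - 1) * top < X -> is_clique (b * (b - 1)) b (map (addn X) s).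
Proof.
have [s_uniq s_top _ _] := s_pattern.
move=> big_X; split; first by rewrite map_inj_uniq //; exact: addnI.
have edge x y : x \in s -> y \in s -> x < y -> G_edge (b * (b - 1)) b (X + x) (X + y).
  move=> xs ys lt_xy; apply: G_edge_of_dvdn; rewrite ?subnDl ?ltn_add2l //.
  - exact: dvdn_shift_low.
  - exact: dvdn_shift_high.
  apply: leq_ltn_trans (ltn_addr _ big_X).
  by rewrite leq_mul // (leq_trans (leq_subr _ _) (s_top y ys)).
move=> _ _ /mapP [x xs ->] /mapP [y ys ->]; rewrite (inj_eq (@addnI X)).
by case: ltngtP => // [lt_xy | lt_yx] _; [exact: edge | exact/G_edgeC/edge].
Qed.

End Shift.
End Cofactor.

Lemma pattern_exists k : 0 < k -> exists N top s, size s = k /\ pattern N top s.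
Proof.
elim: k => // -[_ _ | k IHk _].
  exists 0, 0, [:: 0]; split => //.
  by split => // [x | x y | x y]; rewrite !inE => /eqP -> // /eqP ->.
have [N [top [s [size_s s_pattern]]]] := IHk isT.
have [W [M [cWb dvd_fact]]] := exists_dvdn_coprime_mul_exp b_gt0 (fact_gt0 top).
exists (M + N).+1, ((b - 1) * W + b * top), (grow ((b - 1) * W) s).
by split; [rewrite /= size_map size_s | exact: pattern_grow].
Qed.

Lemma clique_window k : 0 < k -> exists H, 1 <= H /\ forall n, exists s,
  [/\ size s = k, all (fun x => (n + 1 <= x) && (x <= n + H)) s &
       is_clique (b * (b - 1)) b s].
Proof.
move=> k_gt0; have [N [top [s [size_s s_pattern]]]] := pattern_exists k_gt0.
have [W [M [cWb dvd_fact]]] := exists_dvdn_coprime_mul_exp b_gt0 (fact_gt0 top).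
set B := b ^ (M + N).+1; set G := (b - 1) * W.
have cBG : coprime B G.
  by rewrite coprimeXl // coprime_sym coprime_pred_mull.
have BG_gt0 : 0 < B * G.
  by rewrite !muln_gt0 expn_gt0 b_gt0 subn_gt0 b_gt1 (coprime_gt0 cWb).
exists ((b - 1) * top + B * G + top); split; first by rewrite !addn_gt0 BG_gt0 orbT.
move=> n.
have [X [XB XG /andP [lo_X hi_X]]] :=
  @chinese_window B G (top * (B - 1)) 0 (n + (b - 1) * top) BG_gt0 cBG.
have dvd_G_X : G %| X by rewrite /dvdn XG mod0n.
have dvd_B_Xtop : B %| X + top.
  rewrite /dvdn -modnDml XB modnDml -[X in _ + X]muln1 -mulnDr subnK ?expn_gt0 ?b_gt0 //.
  by rewrite modnMl.
exists (map (addn X) s); split; first by rewrite size_map.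
  have [_ s_top _ _] := s_pattern.
  apply/allP => _ /mapP [x xs ->]; have := s_top x xs.
  clear -lo_X hi_X; move: ((b - 1) * top) (B * G) lo_X hi_X => c P *; lia.
apply: (clique_shift cWb dvd_fact s_pattern dvd_G_X dvd_B_Xtop).
exact: leq_ltn_trans (leq_addl _ _) lo_X.
Qed.

End Construction.

Theorem proposition3p4 (a b : nat) (hb : 2 <= b) (ha : a = b * (b - 1)) :
  (forall k : nat, 2 <= k ->
     exists H : nat, 1 <= H /\
       forall n : nat, exists s : seq nat,
         size s = k /\ all (fun x => (n + 1 <= x) && (x <= n + H)) s /\
         is_clique a b s)
  /\
  (forall k : nat, exists s : seq nat,
     size s = k /\ all (fun x => 0 < x) s /\ is_clique a b s).
Proof.
subst a; split => [k k_ge2 | [|k]].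
- have [H [H_gt0 windows]] := clique_window hb (ltnW k_ge2).
  by exists H; split => // n; have [s [? ? ?]] := windows n; exists s.
- by exists [::]; split => //; split => //; split => // ? ?.
- have [H [_ windows]] := clique_window hb (ltn0Sn k).
  have [s [size_s in_window s_clique]] := windows 0.
  exists s; split => //; split => //.
  by apply/allP => x /(allP in_window) /andP [].
Qed.
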